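(* Let $G_1,\dots,G_\ell$ be pairwise vertex-disjoint threshold graphs. Then their disjoint union satisfies $q(G_1\cup\cdots\cup G_\ell)\le 4$.
   Context: A threshold graph is a (simple, not necessarily connected) graph obtained from a single vertex by repeatedly adding either a new isolated vertex or a new dominating vertex (a vertex adjacent to all previously added vertices). For a simple graph $G$ on vertices $v_1,\dots,v_n$, $S(G)$ denotes the set of all real symmetric $n\times n$ matrices $A=(a_{ij})$ such that for all $i\neq j$, $a_{ij}\neq 0$ if and only if $\{v_i,v_j\}$ is an edge of $G$ (diagonal entries are arbitrary). For a square matrix $A$, $\mathrm{DSpec}(A)$ is the set of distinct eigenvalues of $A$, and $q(G)=\min\{|\mathrm{DSpec}(A)| : A\in S(G)\}$. The union $G_1\cup\cdots\cup G_\ell$ of vertex-disjoint graphs has vertex set and edge set equal to the unions of the respective vertex sets and edge sets. *)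

From HB Require Import structures.
From mathcomp Require Import all_boot all_order all_algebra.
From Stdlib Require Rdefinitions.
From mathcomp Require Import Rstruct.
Set Implicit Arguments. Unset Strict Implicit. Unset Printing Implicit Defensive.
Import Order.TTheory GRing.Theory Num.Theory.
Local Open Scope ring_scope.

Definition simple_graph (T : finType) (e : rel T) : Prop :=
  symmetric e /\ irreflexive e.

(* The subgraph of (T, e) induced on the vertex set A is a threshold graph:
   it is obtained from a single vertex by repeatedly adding either a new
   isolated vertex or a new dominating vertex. *)
Inductive threshold_on (T : finType) (e : rel T) : {set T} -> Prop :=
  | threshold_single (x : T) : threshold_on e [set x]
  | threshold_add_isolated (A : {set T}) (y : T) :
      threshold_on e A -> y \notin A ->
      (forall x, x \in A -> ~~ e x y) -> threshold_on e (y |: A)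
  | threshold_add_dominating (A : {set T}) (y : T) :
      threshold_on e A -> y \notin A ->
      (forall x, x \in A -> e x y) -> threshold_on e (y |: A).

Definition in_SG (n : nat) (e : rel 'I_n) (A : 'M[Rdefinitions.R]_n) : Prop :=
  A^T = A /\ (forall i j : 'I_n, i != j -> (A i j != 0) = e i j).

Definition DSpec (n : nat) (A : 'M[Rdefinitions.R]_n) : pred Rdefinitions.R := eigenvalue A.

Definition DSpec_card_le (n : nat) (A : 'M[Rdefinitions.R]_n) (k : nat) : Prop :=
  exists s : seq Rdefinitions.R, [/\ uniq s, (size s <= k)%N & {subset DSpec A <= s}].

(* q(G) <= k, i.e. min { |DSpec(A)| : A in S(G) } <= k. *)
Definition q_le (n : nat) (e : rel 'I_n) (k : nat) : Prop :=
  exists A : 'M[Rdefinitions.R]_n, in_SG e A /\ DSpec_card_le A k.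

From HB Require Import structures.
From mathcomp Require Import all_boot all_order all_algebra.
From Stdlib Require Rdefinitions.
From mathcomp Require Import Rstruct.
From mathcomp Require Import ring lra.
Set Implicit Arguments. Unset Strict Implicit. Unset Printing Implicit Defensive.
Import Order.TTheory GRing.Theory Num.Theory.
Local Open Scope ring_scope.

(* Every threshold graph G has a realization M in S(G) with spectrum in
   {0, 1, 2, 3} and a nowhere-zero eigenvector v for an eigenvalue mu in
   {1, 2}.  Adding an isolated vertex borders M by the diagonal entry mu and
   keeps the eigenvector (v, 1).  Adding a dominating vertex borders M by
   [c v; mu] with c = 1 / |v|: on the orthogonal complement of v nothing
   changes, and on span (v, e_y) the matrix acts as [[mu, 1], [1, mu]], with
   eigenvalues mu - 1 and mu + 1, one of which again lies in {1, 2} and has a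
   nowhere-zero eigenvector.  A disjoint union is realized by the block
   diagonal matrix, whose spectrum is the union of the spectra of the blocks. *)

Local Notation R := Rdefinitions.R.

Section Realizations.

Variable n : nat.
Implicit Types (u v w : 'I_n -> R) (M : 'I_n -> 'I_n -> R) (A : {set 'I_n}).

Definition dot u v : R := \sum_i u i * v i.

Definition vmul u M (j : 'I_n) : R := \sum_i u i * M i j.

Definition supported A u : Prop := forall i, i \notin A -> u i = 0.

Definition left_eigen M (x : R) u : Prop := forall j, vmul u M j = x * u j.

(* The spectrum of the principal submatrix of M on A. *)
Definition spectrum_in A M (s : seq R) : Prop :=
  forall x u, supported A u -> (exists i, u i != 0) -> left_eigen M x u -> x \in s.

(* M restricted to A x A lies in S(G[A]); M vanishes elsewhere. *)
Definition realizes (e : rel 'I_n) A M : Prop :=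
  [/\ forall i j, M i j = M j i,
      forall i j, i \notin A -> M i j = 0 &
      forall i j, i \in A -> j \in A -> i != j -> (M i j != 0) = e i j].

Lemma sum_delta_mul (f : 'I_n -> R) y : \sum_i (i == y)%:R * f i = f y.
Proof.
rewrite (bigD1 y) //= eqxx mul1r big1 ?addr0 // => i /negbTE ->.
by rewrite mul0r.
Qed.

Lemma dot_vmul_sym M u v :
  (forall i j, M i j = M j i) -> dot (vmul u M) v = dot u (vmul v M).
Proof.
move=> symM; rewrite /dot /vmul.
under eq_bigr do rewrite mulr_suml.
rewrite exchange_big /=; apply: eq_bigr => i _.
rewrite mulr_sumr; apply: eq_bigr => j _.
by rewrite (symM i j); ring.
Qed.

Lemma dot_left_eigen M mu u v : left_eigen M mu v -> dot u (vmul v M) = mu * dot u v.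
Proof.
by move=> eigv; rewrite /dot mulr_sumr; apply: eq_bigr => i _; rewrite eigv; ring.
Qed.

Lemma dot_self_gt0 v i : v i != 0 -> 0 < dot v v.
Proof.
move=> vi; rewrite /dot (bigD1 i) //=.
apply: ltr_pwDl; first by rewrite -expr2 lt_def sqr_ge0 sqrf_eq0 vi.
by apply: sumr_ge0 => j _; rewrite -expr2 sqr_ge0.
Qed.

(* When M and v vanish at y, [border M v y c d] is the matrix M bordered by
   the row and column (c v, d) at index y. *)
Definition border M v (y : 'I_n) (c d : R) i j : R :=
  M i j + c * (v i * (j == y)%:R + (i == y)%:R * v j)
        + d * ((i == y)%:R * (j == y)%:R).

Lemma vmul_border M v w y c d j :
  vmul w (border M v y c d) j =
  vmul w M j + c * dot w v * (j == y)%:R + c * w y * v j + d * w y * (j == y)%:R.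
Proof.
rewrite /vmul /border.
rewrite (eq_bigr (fun i => w i * M i j
  + (c * (j == y)%:R) * (w i * v i) + (c * v j) * ((i == y)%:R * w i)
  + (d * (j == y)%:R) * ((i == y)%:R * w i))); last by move=> i _; ring.
by rewrite !big_split /= -!mulr_sumr !sum_delta_mul /dot; ring.
Qed.

Lemma dot_vmul_border M v w v' y c d :
  dot (vmul w (border M v y c d)) v' =
  dot (vmul w M) v' + c * dot w v * v' y + c * w y * dot v v' + d * w y * v' y.
Proof.
rewrite /dot.
rewrite (eq_bigr (fun j => vmul w M j * v' j
  + (c * dot w v) * ((j == y)%:R * v' j) + (c * w y) * (v j * v' j)
  + (d * w y) * ((j == y)%:R * v' j))); last by move=> j _; rewrite vmul_border; ring.
by rewrite !big_split /= -!mulr_sumr !sum_delta_mul.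
Qed.

Section Border.

Variables (A : {set 'I_n}) (M : 'I_n -> 'I_n -> R) (v : 'I_n -> R) (y : 'I_n) (mu : R).
Hypotheses (symM : forall i j, M i j = M j i)
           (suppM : forall i j, i \notin A -> M i j = 0)
           (suppv : supported A v) (eigv : left_eigen M mu v) (yA : y \notin A).

Lemma vmul_new_col w : vmul w M y = 0.
Proof. by rewrite /vmul big1 // => i _; rewrite symM suppM ?mulr0. Qed.

Lemma border_sym c d i j : border M v y c d i j = border M v y c d j i.
Proof. by rewrite /border symM; ring. Qed.

Lemma border_new_row c d j : j != y -> border M v y c d y j = c * v j.
Proof.
move=> jy; rewrite /border suppM // suppv // eqxx (negbTE jy) mulr0n mulr1n.
by ring.
Qed.

Lemma border_old_entry c d i j : i != y -> j != y -> border M v y c d i j = M i j.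
Proof. by move=> iy jy; rewrite /border (negbTE iy) (negbTE jy) mulr0n; ring. Qed.

Lemma border_realizes (e : rel 'I_n) c d :
  symmetric e ->
  (forall i j, i \in A -> j \in A -> i != j -> (M i j != 0) = e i j) ->
  (forall j, j \in A -> (c * v j != 0) = e j y) ->
  realizes e (y |: A) (border M v y c d).
Proof.
move=> esym patM edge_y.
have neq_y j : j \in A -> j != y by move=> jA; apply: contraNneq yA => <-.
split; first exact: border_sym.
  move=> i j; rewrite in_setU1 negb_or => /andP[iy iA].
  by rewrite /border suppM // suppv // (negbTE iy) mulr0n; ring.
move=> i j; rewrite !in_setU1 => /orP[/eqP-> | iA] /orP[/eqP-> | jA];
  rewrite ?eqxx // => ij.
- by rewrite esym -edge_y // border_new_row // eq_sym.
- by rewrite border_sym border_new_row // edge_y.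
- by rewrite border_old_entry ?neq_y // patM.
Qed.

(* Pairing the eigen-equation at y and against v gives
   (x - d) u_y = c <u, v> and (x - mu) <u, v> = c u_y |v|^2. *)
Lemma border_spectrum s c d x u :
  spectrum_in A M s -> supported (y |: A) u -> (exists i, u i != 0) ->
  left_eigen (border M v y c d) x u ->
  x \in s \/ (x - d) * (x - mu) = c ^+ 2 * dot v v.
Proof.
move=> specM suppu nzu eigu.
have vy : v y = 0 by exact: suppv.
have [uy0 | uy] := eqVneq (u y) 0.
  left; apply: (specM x u) => // [i iA | j].
    by have [-> // | iy] := eqVneq i y; apply: suppu; rewrite in_setU1 negb_or iy.
  have [-> | jy] := eqVneq j y; first by rewrite vmul_new_col uy0 mulr0.
  by rewrite -eigu vmul_border uy0 (negbTE jy) mulr0n; ring.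
right.
have eig_y : (x - d) * u y = c * dot u v.
  have := eigu y; rewrite vmul_border vmul_new_col vy eqxx mulr1n => E.
  by rewrite mulrBl -E; ring.
have eig_v : (x - mu) * dot u v = c * u y * dot v v.
  have E : x * dot u v = mu * dot u v + c * u y * dot v v.
    have <- : dot (vmul u (border M v y c d)) v = x * dot u v.
      by rewrite /dot mulr_sumr; apply: eq_bigr => j _; rewrite eigu mulrA.
    by rewrite dot_vmul_border dot_vmul_sym // (dot_left_eigen _ eigv) vy; ring.
  by rewrite mulrBl E; ring.
apply: (mulIf uy).
transitivity ((x - mu) * ((x - d) * u y)); first by ring.
by rewrite eig_y mulrCA eig_v; ring.
Qed.

Lemma border_left_eigen c d a lam :
  a * mu + c = lam * a -> c * a * dot v v + d = lam ->
  left_eigen (border M v y c d) lam (fun i => a * v i + (i == y)%:R).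
Proof.
move=> Ev Ey j.
have vy : v y = 0 by exact: suppv.
have vmulM : vmul (fun i => a * v i + (i == y)%:R) M j = a * mu * v j.
  rewrite /vmul; under eq_bigr do rewrite mulrDl -mulrA.
  by rewrite big_split /= -mulr_sumr sum_delta_mul -/(vmul v M j) eigv suppM // addr0 mulrA.
have dotv : dot (fun i => a * v i + (i == y)%:R) v = a * dot v v.
  rewrite /dot; under eq_bigr do rewrite mulrDl -mulrA.
  by rewrite big_split /= -mulr_sumr sum_delta_mul vy addr0.
rewrite vmul_border vmulM dotv eqxx mulr1n vy mulr0 add0r.
transitivity ((a * mu + c) * v j + (c * a * dot v v + d) * (j == y)%:R); first by ring.
by rewrite Ev Ey; ring.
Qed.

Lemma border_vec_supported a : supported (y |: A) (fun i => a * v i + (i == y)%:R).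
Proof.
move=> i; rewrite in_setU1 negb_or => /andP[iy iA].
by rewrite suppv // (negbTE iy) mulr0n mulr0 addr0.
Qed.

Lemma border_vec_nowhere_zero a :
  a != 0 -> {in A, forall i, v i != 0} ->
  {in y |: A, forall i, a * v i + (i == y)%:R != 0}.
Proof.
move=> a0 nzv i; rewrite in_setU1 => /orP[/eqP-> | iA].
  by rewrite suppv // mulr0 add0r eqxx mulr1n oner_neq0.
have iy : i != y by apply: contraNneq yA => <-.
by rewrite (negbTE iy) mulr0n addr0 mulf_neq0 ?nzv.
Qed.

End Border.

Definition spectral_model (e : rel 'I_n) A M : Prop :=
  [/\ realizes e A M, spectrum_in A M [:: 0; 1; 2; 3] &
      exists (mu : R) v, [/\ mu \in [:: 1; 2], supported A v,
                             {in A, forall i, v i != 0} & left_eigen M mu v]].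

Lemma spectral_model_set0 (e : rel 'I_n) : spectral_model e set0 (fun _ _ => 0).
Proof.
split.
- by split=> // i j; rewrite in_set0.
- by move=> x u suppu [i]; rewrite suppu ?in_set0 ?eqxx.
- exists 1, (fun _ => 0); split=> // [|i|j]; first by rewrite !inE eqxx.
    by rewrite in_set0.
  by rewrite /vmul big1 ?mulr0 // => i _; rewrite mulr0.
Qed.

Lemma spectral_model_isolated (e : rel 'I_n) A M y :
  symmetric e -> spectral_model e A M -> y \notin A ->
  {in A, forall x, ~~ e x y} -> exists M', spectral_model e (y |: A) M'.
Proof.
move=> esym [[symM suppM patM] specM [mu [v [mu12 suppv nzv eigv]]]] yA noedge.
exists (border M v y 0 mu); split.
- apply: border_realizes => // j jA.
  by rewrite mul0r eqxx (negbTE (noedge j jA)).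
- move=> x u suppu nzu eigu.
  have [// | ] := border_spectrum symM suppM suppv eigv yA specM suppu nzu eigu.
  rewrite expr0n mul0r => /eqP; rewrite mulf_eq0 orbb subr_eq0 => /eqP ->.
  by move: mu12; rewrite !inE => /orP[] ->; rewrite !orbT.
- exists mu, (fun i => 1 * v i + (i == y)%:R); split=> //.
  + exact: border_vec_supported suppv _.
  + exact: (border_vec_nowhere_zero suppv yA (oner_neq0 _) nzv).
  + by apply: (border_left_eigen suppM suppv eigv yA); ring.
Qed.

Lemma spectral_model_dominating (e : rel 'I_n) A M y :
  symmetric e -> spectral_model e A M -> A != set0 -> y \notin A ->
  {in A, forall x, e x y} -> exists M', spectral_model e (y |: A) M'.
Proof.
move=> esym [[symM suppM patM] specM [mu [v [mu12 suppv nzv eigv]]]] A0 yA edge.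
have [c c0 cN] : exists2 c : R, c != 0 & c ^+ 2 * dot v v = 1.
  have /set0Pn[a aA] := A0.
  have N0 : 0 < dot v v := dot_self_gt0 (nzv a aA).
  exists (Num.sqrt (dot v v))^-1; first by rewrite invr_eq0 gt_eqF ?sqrtr_gt0.
  by rewrite exprVn sqr_sqrtr ?ltW // mulVf ?gt_eqF.
have [t t2 mut] : exists2 t : R, t ^+ 2 = 1 & mu + t \in [:: 1; 2].
  move: mu12; rewrite !inE => /orP[]/eqP->; [exists 1 | exists (-1)];
    rewrite ?sqrrN ?expr1n // !inE; apply/orP; [right | left]; apply/eqP; ring.
exists (border M v y c mu); split.
- by apply: border_realizes => // j jA; rewrite mulf_neq0 ?nzv ?edge.
- move=> x u suppu nzu eigu.
  have [// | ] := border_spectrum symM suppM suppv eigv yA specM suppu nzu eigu.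
  rewrite cN -expr2 => /eqP; rewrite sqrf_eq1.
  move: mu12; rewrite !inE => /orP[]/eqP-> /orP[]/eqP dx;
    [have -> : x = 2 | have -> : x = 0 | have -> : x = 3 | have -> : x = 1];
    rewrite ?eqxx ?orbT //; lra.
- exists (mu + t), (fun i => t * c * v i + (i == y)%:R); split=> //.
  + exact: border_vec_supported suppv _.
  + apply: (border_vec_nowhere_zero suppv yA _ nzv).
    by rewrite mulf_neq0 // -sqrf_eq0 t2 oner_neq0.
  + apply: (border_left_eigen suppM suppv eigv yA).
      by transitivity (t * c * mu + t ^+ 2 * c); [rewrite t2 | ]; ring.
    by transitivity (t * (c ^+ 2 * dot v v) + mu); [ring | rewrite cN; ring].
Qed.

Lemma threshold_on_neq0 (e : rel 'I_n) A : threshold_on e A -> A != set0.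
Proof.
case=> [x | B y _ _ _ | B y _ _ _]; apply/set0Pn;
  [exists x | exists y | exists y]; rewrite ?set11 ?setU11 //.
Qed.

Lemma threshold_spectral_model (e : rel 'I_n) A :
  symmetric e -> threshold_on e A -> exists M, spectral_model e A M.
Proof.
move=> esym; elim=> [x | B y _ [M HM] yB noedge | B y tB [M HM] yB edge].
- have x0 : x \notin set0 by rewrite in_set0.
  rewrite -[[set x]]setU0; apply: spectral_model_isolated esym (spectral_model_set0 e) x0 _.
  by move=> z; rewrite in_set0.
- exact: spectral_model_isolated HM yB noedge.
- exact: spectral_model_dominating HM (threshold_on_neq0 tB) yB edge.
Qed.

End Realizations.

Section BlockDiagonal.

Variables (n l : nat) (e : rel 'I_n) (c : 'I_n -> 'I_l) (Mf : 'I_l -> 'I_n -> 'I_n -> R).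
Hypothesis realMf : forall k, realizes e [set i | c i == k] (Mf k).

Definition block_diag i j : R := Mf (c i) i j.

Lemma Mf_out k i j : c j != k -> Mf k i j = 0.
Proof. by move=> cj; have [symM suppM _] := realMf k; rewrite symM suppM // inE. Qed.

Lemma block_diag_realizes :
  (forall x y, e x y -> c x = c y) -> realizes e [set: 'I_n] block_diag.
Proof.
move=> eclass; split=> i j; rewrite ?in_setT // /block_diag.
  have [cij | cij] := eqVneq (c i) (c j); first by rewrite cij; case: (realMf (c j)).
  by rewrite !Mf_out // eq_sym.
move=> _ _ ij; have [cij | cij] := eqVneq (c i) (c j).
  by case: (realMf (c i)) => _ _ ->; rewrite ?inE ?cij.
rewrite Mf_out 1?eq_sym // eqxx; apply/esym/negbTE.
by apply: contra_neqN cij; exact: eclass.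
Qed.

Lemma block_diag_spectrum s :
  (forall k, spectrum_in [set i | c i == k] (Mf k) s) ->
  spectrum_in [set: 'I_n] block_diag s.
Proof.
move=> specMf x u _ [j0 uj0] eigu.
pose k := c j0; pose uk i := if c i == k then u i else 0.
apply: (specMf k x uk) => [i | | j].
- by rewrite inE /uk => /negbTE ->.
- by exists j0; rewrite /uk eqxx.
have [cj | cj] := eqVneq (c j) k.
  rewrite /uk cj eqxx -eigu /vmul /block_diag; apply: eq_bigr => i _.
  have [ci | ci] := eqVneq (c i) k; first by rewrite ci.
  by rewrite mul0r Mf_out ?mulr0 // cj eq_sym.
rewrite /uk (negbTE cj) mulr0 /vmul big1 // => i _.
by rewrite Mf_out ?mulr0.
Qed.

End BlockDiagonal.

Lemma realizes_in_SG n (e : rel 'I_n) (M : 'I_n -> 'I_n -> R) :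
  realizes e [set: 'I_n] M -> in_SG e (\matrix_(i, j) M i j).
Proof.
case=> symM _ patM; split; first by apply/matrixP => i j; rewrite !mxE symM.
by move=> i j ij; rewrite mxE patM ?in_setT.
Qed.

Lemma eigenvalue_spectrum_in n (M : 'I_n -> 'I_n -> R) s x :
  spectrum_in [set: 'I_n] M s -> eigenvalue (\matrix_(i, j) M i j) x -> x \in s.
Proof.
move=> specM /eigenvalueP[w eigw /matrix0Pn[i0 [j0 wj0]]].
apply: (specM x (w 0)) => [i | | j]; first by rewrite in_setT.
  by exists j0; rewrite -(ord1 i0).
have := congr1 (fun m : 'rV_n => m 0 j) eigw; rewrite !mxE => <-.
by apply: eq_bigr => i _; rewrite mxE.
Qed.

Theorem mainTheorem2 (n l : nat) (e : rel 'I_n) (c : 'I_n -> 'I_l) :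
  simple_graph e ->
  (forall x y : 'I_n, e x y -> c x = c y) ->
  (forall i : 'I_l, threshold_on e [set v | c v == i]) ->
  q_le e 4.
Proof.
move=> [esym _] eclass thr.
have [Mf modelMf] := fin_all_exists (fun k => threshold_spectral_model esym (thr k)).
have realMf k : realizes e [set v | c v == k] (Mf k) by case: (modelMf k).
exists (\matrix_(i, j) block_diag c Mf i j); split.
  exact/realizes_in_SG/block_diag_realizes.
exists [:: 0; 1; 2; 3]; split=> //.
  by rewrite /= !inE -[0]/(0%:R) -[1]/(1%:R) !eqr_nat.
move=> x; rewrite unfold_in => /eigenvalue_spectrum_in; apply.
by apply: block_diag_spectrum => // k; case: (modelMf k).
Qed.
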